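(* Let Assumption 1 hold and suppose $n_k\ge N-1$ for some $k\in[L-1]$. Let $(W^*_l,b^*_l)_{l=1}^L$ be a critical point of $\Phi$ such that (1) there is a subset $\mathcal{I}\subseteq\{k+1,\dots,L\}$ with $k+1\in\mathcal{I}$ such that $(W^*_l,b^*_l)_{l=1}^L$ is non-degenerate on the variables $\{(W_l,b_l): l\in\mathcal{I}\}$, and (2) $\operatorname{rank}(W^*_l)=n_l$ for all $l\in[k+2,L]$. Then $(W^*_l,b^*_l)_{l=1}^L$ is a global minimum of $\Phi$.
   Context: Training data: $X=[x_1,\dots,x_N]^T\in\mathbb{R}^{N\times d}$, $Y=[y_1,\dots,y_N]^T\in\mathbb{R}^{N\times m}$ with entries $y_{ij}$. A fully connected network with layers $0,\dots,L$ has widths $n_0=d,n_1,\dots,n_{L-1},n_L=m$, weights $W_k\in\mathbb{R}^{n_{k-1}\times n_k}$ and biases $b_k\in\mathbb{R}^{n_k}$; $\mathcal{P}$ is the space of all parameters $(W_k,b_k)_{k=1}^L$ (identified with a Euclidean space). With $\sigma$ applied componentwise, $f_0(x)=x$, $g_k(x)=W_k^Tf_{k-1}(x)+b_k$, $f_k(x)=\sigma(g_k(x))$. The objective is $\Phi((W_k,b_k)_{k=1}^L)=\sum_{i=1}^N\sum_{j=1}^m l(f_{Lj}(x_i)-y_{ij})$, whose minimum over $\mathcal{P}$ is assumed attained. $[a]=\{1,\dots,a\}$, $[a,b]$ the integers from $a$ to $b$. Assumption 1: (1) $x_i\neq x_j$ for $i\ne j$; (2) $\sigma$ is real analytic on $\mathbb{R}$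 with $\sigma'(t)>0$ for all $t$, and either $\sigma$ is bounded or there are positive $\rho_1,\dots,\rho_4$ with $|\sigma(t)|\le\rho_1e^{\rho_2t}$ for $t<0$ and $|\sigma(t)|\le\rho_3t+\rho_4$ for $t\ge0$; (3) $l\in C^2(\mathbb{R})$ and whenever $l'(a)=0$, $a$ is a global minimizer of $l$. Definitions: a critical point is a point where $\nabla\Phi=0$. For a $C^2$ function $f$ and a subset $S$ of its variables, $\nabla^2_Sf$ denotes the Hessian with respect to the variables in $S$ only (the principal submatrix of the full Hessian). A critical point is non-degenerate on $S$ if $\nabla_S^2 f$ is non-singular there; it is non-degenerate if the full Hessian is non-singular. Here ''the variables $\{(W_l,b_l):l\in\mathcal{I}\}$'' means all entries of $W_l$ and $b_l$ for $l\in\mathcal{I}$. *)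

From Stdlib Require Import Reals Lra List.
Import ListNotations.
Open Scope R_scope.

Fixpoint rsum (n : nat) (f : nat -> R) : R :=
  match n with O => 0 | S p => rsum p f + f p end.

Definition real_analytic (s : R -> R) : Prop :=
  forall x0 : R, exists r : R, 0 < r /\ exists a : nat -> R,
    forall x, Rabs (x - x0) < r -> Pser a (x - x0) (s x).

Definition activation_ok (sigma : R -> R) : Prop :=
  real_analytic sigma /\
  (forall t, exists d, derivable_pt_lim sigma t d /\ 0 < d) /\
  ((exists M, forall t, Rabs (sigma t) <= M) \/
   (exists r1 r2 r3 r4, 0 < r1 /\ 0 < r2 /\ 0 < r3 /\ 0 < r4 /\
      (forall t, t < 0 -> Rabs (sigma t) <= r1 * exp (r2 * t)) /\
      (forall t, 0 <= t -> Rabs (sigma t) <= r3 * t + r4))).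

Definition loss_ok (l : R -> R) : Prop :=
  exists l1 l2 : R -> R,
    (forall a, derivable_pt_lim l a (l1 a)) /\
    (forall a, derivable_pt_lim l1 a (l2 a)) /\
    continuity l2 /\
    (forall a, l1 a = 0 -> forall b, l a <= l b).

(* coordinates of the parameter space: CW k i j = (W_k)_{ij}, Cb k j = (b_k)_j *)
Inductive coord : Type :=
  | CW (k i j : nat)
  | Cb (k j : nat).

Definition coord_eqb (c c' : coord) : bool :=
  match c, c' with
  | CW k i j, CW k' i' j' => Nat.eqb k k' && Nat.eqb i i' && Nat.eqb j j'
  | Cb k j, Cb k' j' => Nat.eqb k k' && Nat.eqb j j'
  | _, _ => false
  end.

Definition coord_layer (c : coord) : nat :=
  match c with CW k _ _ => k | Cb k _ => k end.

(* the genuine coordinates for widths n : n 0 = d, ..., n L = m.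
   W_k is n_{k-1} x n_k, b_k in R^{n_k}. *)
Definition valid (L : nat) (n : nat -> nat) (c : coord) : Prop :=
  match c with
  | CW k i j => (1 <= k <= L)%nat /\ (i < n (k - 1)%nat)%nat /\ (j < n k)%nat
  | Cb k j => (1 <= k <= L)%nat /\ (j < n k)%nat
  end.

Definition coords (L : nat) (n : nat -> nat) : list coord :=
  flat_map (fun k =>
     flat_map (fun i => map (fun j => CW k i j) (seq 0 (n k))) (seq 0 (n (k - 1)%nat))
     ++ map (fun j => Cb k j) (seq 0 (n k)))
  (seq 1 L).

(* a point of P: a value for each coordinate (values at non-valid
   coordinates are irrelevant: Phi does not read them) *)
Definition params := coord -> R.

Definition perturb (th : params) (c : coord) (t : R) : params :=
  fun c' => if coord_eqb c c' then th c' + t else th c'.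

Fixpoint fwd (sigma : R -> R) (n : nat -> nat) (th : params) (k : nat)
  (x : nat -> R) : nat -> R :=
  match k with
  | O => x
  | S p => fun j =>
      sigma (rsum (n p) (fun i => th (CW (S p) i j) * fwd sigma n th p x i)
             + th (Cb (S p) j))
  end.

(* Phi(theta) = sum_{i<N} sum_{j<m} l( f_{Lj}(x_i) - y_{ij} ),
   X i = x_{i+1} (coordinates p < d), Y i j = y_{i+1, j+1} *)
Definition Phi (sigma l : R -> R) (L : nat) (n : nat -> nat) (N : nat)
  (X : nat -> nat -> R) (Y : nat -> nat -> R) (th : params) : R :=
  rsum N (fun i => rsum (n L) (fun j => l (fwd sigma n th L (X i) j - Y i j))).

Definition has_partial (F : params -> R) (c : coord) (G : params -> R) : Prop :=
  forall th, derivable_pt_lim (fun t => F (perturb th c t)) 0 (G th).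

Definition critical_point (F : params -> R) (L : nat) (n : nat -> nat)
  (th : params) : Prop :=
  forall c, valid L n c -> derivable_pt_lim (fun t => F (perturb th c t)) 0 0.

Definition is_hessian (F : params -> R) (L : nat) (n : nat -> nat)
  (th : params) (H : coord -> coord -> R) : Prop :=
  exists G : coord -> params -> R,
    (forall c, valid L n c -> has_partial F c (G c)) /\
    (forall c c', valid L n c -> valid L n c' ->
       derivable_pt_lim (fun t => G c (perturb th c' t)) 0 (H c c')).

Definition nonsingular_on (L : nat) (n : nat -> nat) (S : coord -> bool)
  (H : coord -> coord -> R) : Prop :=
  forall v : coord -> R,
    (forall c, In c (filter S (coords L n)) ->
       fold_right Rplus 0
         (map (fun c' => H c c' * v c') (filter S (coords L n))) = 0) ->
    forall c, In c (filter S (coords L n)) -> v c = 0.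

Definition nondegenerate_on_layers (F : params -> R) (L : nat) (n : nat -> nat)
  (I : nat -> bool) (th : params) : Prop :=
  exists H, is_hessian F L n th H /\
    nonsingular_on L n (fun c => I (coord_layer c)) H.

Definition full_column_rank (n : nat -> nat) (th : params) (l : nat) : Prop :=
  forall v : nat -> R,
    (forall i, (i < n (l - 1)%nat)%nat -> rsum (n l) (fun j => th (CW l i j) * v j) = 0) ->
    forall j, (j < n l)%nat -> v j = 0.

Definition global_min (F : params -> R) (th : params) : Prop :=
  forall th', F th <= F th'.

(** The gradient of [Phi] in the weights and bias of unit [j] of layer [k+1] is
    [M^T delta_j], where [M] is the [N x (n_k + 1)] matrix of the features
    [f_k(x_i)] augmented by a constant [1], and [delta_j] collects the
    backpropagated errors of that unit over the samples.  Perturbing the weight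
    [(W_{k+1})_{p0}] has, sample by sample, the same effect as perturbing the
    bias [(b_{k+1})_0] by [f_k(x_i)_p] times as much, so the Hessian columns of
    these variables are combinations of the bias column with coefficients given
    by [M].  Hence a vector [u] with [M u = 0] yields a kernel vector of the
    Hessian restricted to layers [>= k+1], and non-degeneracy forces [M] to have
    trivial kernel.  Since [M] has at least as many columns as rows, [M^T] is
    injective too, so criticality gives [delta = 0] at layer [k+1].  Full column
    rank of [W_{k+2}, ..., W_L] and [sigma' > 0] propagate this to the output
    layer, where it says [l'(f_L(x_i) - y_i) = 0]; by Assumption 1(3) every
    summand of [Phi] is then minimal. *)

From Stdlib Require Import Reals List Lra Lia FunctionalExtensionality.
From Coquelicot Require Import Coquelicot.
Open Scope R_scope.

Module RankArgument.
From mathcomp Require Import all_boot all_algebra Rstruct.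
Import GRing.Theory.

Lemma rsum_big n (f : nat -> R) : rsum n f = (\sum_(j < n) f j)%R.
Proof. by elim: n => [|n IH]; rewrite ?big_ord0 // big_ord_recr /= IH. Qed.

Lemma trivial_cokernel_of_trivial_kernel (a b : nat) (M : nat -> nat -> R) :
  (a <= b)%coq_nat ->
  (forall u, (forall i, (i < a)%coq_nat -> rsum b (fun p => M i p * u p) = 0) ->
     forall p, (p < b)%coq_nat -> u p = 0) ->
  forall z, (forall p, (p < b)%coq_nat -> rsum a (fun i => z i * M i p) = 0) ->
  forall i, (i < a)%coq_nat -> z i = 0.
Proof.
Local Open Scope ring_scope.
move=> /leP le_ab ker_M z coker_z i /ltP lt_ia.
pose A := \matrix_(i < a, p < b) M i p.
have free_At : row_free A^T.
  apply: inj_row_free => v vA0; apply/rowP => p; rewrite mxE.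
  pose u q := if insub q is Some p' then v 0 p' else 0%R.
  have uE (p' : 'I_b) : u p' = v 0 p' by rewrite /u valK.
  rewrite -uE; apply: ker_M => [i' /ltP lt_i'|]; last exact/ltP.
  transitivity ((v *m A^T) 0 (Ordinal lt_i')); last by rewrite vA0 mxE.
  by rewrite rsum_big mxE; apply: eq_bigr => q _; rewrite uE !mxE mulrC.
have free_A : row_free A.
  rewrite /row_free eqn_leq rank_leq_row /=.
  by move: free_At; rewrite /row_free mxrank_tr => /eqP ->.
pose w := \row_(i < a) z i.
have wA0 : w *m A = 0.
  apply/rowP => p; rewrite !mxE -[RHS](coker_z p (ltP (ltn_ord p))) rsum_big.
  by apply: eq_bigr => i' _; rewrite !mxE.
have /rowP/(_ (Ordinal lt_ia)) : w = 0 by apply: (row_free_inj free_A); rewrite wA0 mul0mx.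
by rewrite !mxE.
Qed.

End RankArgument.

Lemma CV_radius_gt0_of_Pser (a : nat -> R) (h v : R) :
  h <> 0 -> Pser a h v -> Rbar_lt 0 (CV_radius a).
Proof.
  intros Hh Hv.
  destruct (Rbar_lt_le_dec 0 (CV_radius a)) as [Hpos | Hle]; [exact Hpos |].
  exfalso. apply (CV_disk_outside a h).
  - eapply Rbar_le_lt_trans; [exact Hle |]. simpl. now apply Rabs_pos_lt.
  - apply ex_series_lim_0, ex_pseries_R. exists v. now apply is_pseries_Reals.
Qed.

Lemma real_analytic_ex_derive_Derive (f : R -> R) :
  real_analytic f -> forall x, ex_derive (Derive f) x.
Proof.
  intros Hf x0. destruct (Hf x0) as [r [Hr [a Ha]]].
  assert (Hrad : Rbar_lt (Rabs (x0 + - x0)) (CV_radius a)).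
  { rewrite Rplus_opp_r, Rabs_R0.
    apply (CV_radius_gt0_of_Pser a (r / 2) (f (x0 + r / 2))); [lra |].
    replace (r / 2) with (x0 + r / 2 - x0) at 1 by ring.
    apply Ha. replace (x0 + r / 2 - x0) with (r / 2) by ring. rewrite Rabs_pos_eq; lra. }
  apply (ex_derive_n_ext_loc (fun y => PSeries a (y + - x0)) f 2 x0).
  - exists (mkposreal r Hr). intros y Hy. apply is_pseries_unique, is_pseries_Reals, Ha.
    exact Hy.
  - apply ex_derive_n_comp_trans, ex_derive_n_PSeries, Hrad.
Qed.

(** * Derivatives of real functions at a point *)

Lemma dlim_ext f g x v :
  (forall t, f t = g t) -> derivable_pt_lim f x v -> derivable_pt_lim g x v.
Proof. intros H. now replace g with f by (apply functional_extensionality; auto). Qed.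

Lemma dlim_eq f x v w : derivable_pt_lim f x v -> v = w -> derivable_pt_lim f x w.
Proof. now intros H <-. Qed.

Lemma dlim_const c x : derivable_pt_lim (fun _ => c) x 0.
Proof. exact (derivable_pt_lim_const c x). Qed.

Lemma dlim_plus f g x a b : derivable_pt_lim f x a -> derivable_pt_lim g x b ->
  derivable_pt_lim (fun t => f t + g t) x (a + b).
Proof. exact (derivable_pt_lim_plus f g x a b). Qed.

Lemma dlim_mult f g x a b : derivable_pt_lim f x a -> derivable_pt_lim g x b ->
  derivable_pt_lim (fun t => f t * g t) x (a * g x + f x * b).
Proof. exact (derivable_pt_lim_mult f g x a b). Qed.

Lemma dlim_comp f g x a b : derivable_pt_lim f x a -> derivable_pt_lim g (f x) b ->
  derivable_pt_lim (fun t => g (f t)) x (b * a).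
Proof. exact (derivable_pt_lim_comp f g x a b). Qed.

Lemma dlim_scal c f x a : derivable_pt_lim f x a ->
  derivable_pt_lim (fun t => c * f t) x (c * a).
Proof.
  intros H. eapply dlim_eq; [apply (dlim_mult (fun _ => c) f); [apply dlim_const | exact H] | ring].
Qed.

Lemma dlim_affine c a x : derivable_pt_lim (fun t => c + t * a) x a.
Proof.
  eapply dlim_eq.
  - apply (dlim_plus (fun _ => c) (fun t => t * a)); [apply dlim_const |].
    apply (dlim_mult (fun t => t) (fun _ => a)); [apply derivable_pt_lim_id | apply dlim_const].
  - ring.
Qed.

Lemma dlim_rsum n (F : nat -> R -> R) F' x :
  (forall i, (i < n)%nat -> derivable_pt_lim (F i) x (F' i)) ->
  derivable_pt_lim (fun t => rsum n (fun i => F i t)) x (rsum n F').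
Proof.
  induction n; simpl; intros HF; [apply dlim_const |].
  apply dlim_plus; [apply IHn; auto | apply HF; lia].
Qed.

Definition derivable_at (f : R -> R) (x : R) : Prop := exists v, derivable_pt_lim f x v.

Lemma Derive_spec f x : derivable_at f x -> derivable_pt_lim f x (Derive f x).
Proof.
  intros [v Hv]. apply is_derive_Reals, Derive_correct. exists v. now apply is_derive_Reals.
Qed.

Lemma derivable_at_ext f g x : (forall t, f t = g t) -> derivable_at f x -> derivable_at g x.
Proof. intros H [v Hv]. exists v. eapply dlim_ext; eauto. Qed.

Lemma derivable_at_const c x : derivable_at (fun _ => c) x.
Proof. eexists; apply dlim_const. Qed.

Lemma derivable_at_id x : derivable_at (fun t => t) x.
Proof. eexists; apply derivable_pt_lim_id. Qed.

Lemma derivable_at_plus f g x :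
  derivable_at f x -> derivable_at g x -> derivable_at (fun t => f t + g t) x.
Proof. intros [a Ha] [b Hb]. eexists; apply dlim_plus; eauto. Qed.

Lemma derivable_at_mult f g x :
  derivable_at f x -> derivable_at g x -> derivable_at (fun t => f t * g t) x.
Proof. intros [a Ha] [b Hb]. eexists; apply dlim_mult; eauto. Qed.

Lemma derivable_at_comp f g x :
  derivable_at f x -> derivable_at g (f x) -> derivable_at (fun t => g (f t)) x.
Proof. intros [a Ha] [b Hb]. eexists; apply dlim_comp; eauto. Qed.

Lemma derivable_at_rsum n (F : nat -> R -> R) x :
  (forall i, (i < n)%nat -> derivable_at (F i) x) ->
  derivable_at (fun t => rsum n (fun i => F i t)) x.
Proof.
  induction n; simpl; intros HF; [apply derivable_at_const |].
  apply derivable_at_plus; [apply IHn; auto | apply HF; lia].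
Qed.

(** * Finite sums *)

Lemma rsum_ext n f g : (forall i, (i < n)%nat -> f i = g i) -> rsum n f = rsum n g.
Proof. induction n; simpl; intros H; auto. rewrite IHn, H; auto. Qed.

Lemma rsum_plus n f g : rsum n (fun i => f i + g i) = rsum n f + rsum n g.
Proof. induction n; simpl; [ring | rewrite IHn; ring]. Qed.

Lemma rsum_mult_l n c f : rsum n (fun i => c * f i) = c * rsum n f.
Proof. induction n; simpl; [ring | rewrite IHn; ring]. Qed.

Lemma rsum_mult_r n c f : rsum n (fun i => f i * c) = rsum n f * c.
Proof. induction n; simpl; [ring | rewrite IHn; ring]. Qed.

Lemma rsum_zero n f : (forall i, (i < n)%nat -> f i = 0) -> rsum n f = 0.
Proof. induction n; simpl; intros H; auto. rewrite IHn, H; auto; ring. Qed.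

Lemma rsum_swap n m (f : nat -> nat -> R) :
  rsum n (fun i => rsum m (fun j => f i j)) = rsum m (fun j => rsum n (fun i => f i j)).
Proof.
  induction n; simpl.
  - symmetry; now apply rsum_zero.
  - now rewrite IHn, <- rsum_plus.
Qed.

Lemma rsum_point n a (g : nat -> R) :
  rsum n (fun a' => if Nat.eqb a a' then g a' else 0) = if Nat.ltb a n then g a else 0.
Proof.
  induction n; simpl; [now destruct a |]. rewrite IHn.
  destruct (Nat.eqb_spec a n), (Nat.ltb_spec a n), (Nat.ltb_spec a (S n));
    subst; try lia; ring.
Qed.

Lemma rsum_le n f g : (forall i, (i < n)%nat -> f i <= g i) -> rsum n f <= rsum n g.
Proof. induction n; simpl; intros H; [lra |]. apply Rplus_le_compat; auto. Qed.

Definition listsum {T} (l : list T) (f : T -> R) : R := fold_right Rplus 0 (map f l).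

Lemma listsum_app {T} (l1 l2 : list T) f :
  listsum (l1 ++ l2) f = listsum l1 f + listsum l2 f.
Proof. unfold listsum. induction l1; simpl; [ring | rewrite IHl1; ring]. Qed.

Lemma listsum_map {T U} (g : T -> U) l f : listsum (map g l) f = listsum l (fun x => f (g x)).
Proof. unfold listsum. now rewrite map_map. Qed.

Lemma listsum_flat_map {T U} (g : T -> list U) l f :
  listsum (flat_map g l) f = listsum l (fun x => listsum (g x) f).
Proof. induction l; simpl; [reflexivity |]. now rewrite listsum_app, IHl. Qed.

Lemma listsum_zero {T} (l : list T) f : (forall x, In x l -> f x = 0) -> listsum l f = 0.
Proof. unfold listsum. induction l; simpl; intros H; auto. rewrite H, IHl; auto; ring. Qed.

Lemma listsum_filter {T} (P : T -> bool) l f :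
  (forall x, In x l -> P x = false -> f x = 0) -> listsum (filter P l) f = listsum l f.
Proof.
  unfold listsum. induction l; simpl; intros H; auto.
  destruct (P a) eqn:E; simpl; rewrite IHl; auto. rewrite H; auto; ring.
Qed.

Lemma listsum_seq0 n f : listsum (seq 0 n) f = rsum n f.
Proof.
  induction n; [reflexivity |]. rewrite seq_S, listsum_app, IHn. unfold listsum; simpl; ring.
Qed.

Lemma listsum_seq_point a len g x : (a <= x < a + len)%nat ->
  (forall y, y <> x -> g y = 0) -> listsum (seq a len) g = g x.
Proof.
  revert a; induction len; intros a Hx Hg; [lia |].
  change (g a + listsum (seq (S a) len) g = g x).
  destruct (Nat.eq_dec a x) as [-> | Hax].
  - rewrite listsum_zero; [ring |]. intros y Hy. apply in_seq in Hy. apply Hg. lia.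
  - rewrite IHlen, Hg; auto; [ring | lia].
Qed.

(** * Coordinates of the parameter space *)

Lemma in_coords L n c : In c (coords L n) <-> valid L n c.
Proof.
  unfold coords, valid. rewrite in_flat_map. split.
  - intros [k [Hk Hc]]. apply in_seq in Hk. apply in_app_iff in Hc as [Hc | Hc].
    + apply in_flat_map in Hc as [i [Hi Hc]]. apply in_map_iff in Hc as [j [<- Hj]].
      apply in_seq in Hi, Hj. lia.
    + apply in_map_iff in Hc as [j [<- Hj]]. apply in_seq in Hj. lia.
  - destruct c as [k i j | k j]; intros H; exists k; (split; [apply in_seq; lia |]);
      apply in_app_iff.
    + left. apply in_flat_map. exists i. split; [apply in_seq; lia |].
      apply in_map_iff. exists j. split; [reflexivity | apply in_seq; lia].
    + right. apply in_map_iff. exists j. split; [reflexivity | apply in_seq; lia].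
Qed.

Definition layer_coords (n : nat -> nat) (K : nat) : list coord :=
  flat_map (fun i => map (fun j => CW K i j) (seq 0 (n K))) (seq 0 (n (K - 1)%nat))
  ++ map (fun j => Cb K j) (seq 0 (n K)).

Lemma layer_coords_layer n K c : In c (layer_coords n K) -> coord_layer c = K.
Proof.
  unfold layer_coords. intros H. apply in_app_iff in H as [H | H].
  - apply in_flat_map in H as [i [_ H]]. now apply in_map_iff in H as [j [<- _]].
  - now apply in_map_iff in H as [j [<- _]].
Qed.

Lemma listsum_coords_layer L n K (f : coord -> R) : (1 <= K <= L)%nat ->
  (forall c, coord_layer c <> K -> f c = 0) ->
  listsum (coords L n) f = listsum (layer_coords n K) f.
Proof.
  intros HK Hf. unfold coords. rewrite listsum_flat_map.
  apply (listsum_seq_point 1 L (fun K' => listsum (layer_coords n K') f) K); [lia |].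
  intros K' HK'. apply listsum_zero. intros c Hc. apply Hf.
  now rewrite (layer_coords_layer n K' c Hc).
Qed.

Lemma coord_eqb_true c c' : coord_eqb c c' = true -> c = c'.
Proof.
  destruct c, c'; simpl; try discriminate; intros H;
  repeat match goal with H : (_ && _)%bool = true |- _ => apply andb_prop in H as [? ?] end;
  repeat match goal with H : Nat.eqb _ _ = true |- _ => apply Nat.eqb_eq in H end;
  now subst.
Qed.

Lemma coord_eqb_false_layer c c' : coord_layer c <> coord_layer c' -> coord_eqb c c' = false.
Proof.
  intros H. destruct (coord_eqb c c') eqn:E; auto. apply coord_eqb_true in E. now subst.
Qed.

Lemma perturb_val th c t c' : perturb th c t c' = th c' + (if coord_eqb c c' then t else 0).
Proof. unfold perturb. destruct (coord_eqb c c'); ring. Qed.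

Lemma perturb_other th c t c' : coord_layer c' <> coord_layer c -> perturb th c t c' = th c'.
Proof. intros H. unfold perturb. now rewrite coord_eqb_false_layer by auto. Qed.

Lemma perturb_derivable th c c' : derivable_at (fun t => perturb th c t c') 0.
Proof.
  apply (derivable_at_ext (fun t => th c' + (if coord_eqb c c' then t else 0))).
  - intros t. now rewrite perturb_val.
  - apply derivable_at_plus; [apply derivable_at_const |].
    destruct (coord_eqb c c'); [apply derivable_at_id | apply derivable_at_const].
Qed.

(** * Backpropagation *)

Section Network.

Variables (sigma l s1 l1 : R -> R) (n : nat -> nat) (L : nat).

(* [pre th q x] is the preactivation [g_{q+1}(x)], so that [f_{q+1} = sigma o pre th q]. *)
Definition pre (th : params) (q : nat) (x : nat -> R) (j : nat) : R :=
  rsum (n q) (fun a => th (CW (S q) a j) * fwd sigma n th q x a) + th (Cb (S q) j).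

Definition next_pre (th : params) (q : nat) (g : nat -> R) : nat -> R :=
  fun m => rsum (n q) (fun r => th (CW (S q) r m) * sigma (g r)) + th (Cb (S q) m).

(* The loss of one sample as a function of the preactivation [g] of layer [q],
   [d = L - q] layers below the output, and its gradient [delta] in [g]
   ([s1], [l1] stand for [sigma'], [l']). *)
Fixpoint loss_from (th : params) (y : nat -> R) (d q : nat) (g : nat -> R) : R :=
  match d with
  | O => rsum (n q) (fun m => l (sigma (g m) - y m))
  | S d' => loss_from th y d' (S q) (next_pre th q g)
  end.

Fixpoint delta (th : params) (y : nat -> R) (d q : nat) (g : nat -> R) (r : nat) : R :=
  match d with
  | O => l1 (sigma (g r) - y r) * s1 (g r)
  | S d' => s1 (g r) *
      rsum (n (S q)) (fun m => th (CW (S q) r m) * delta th y d' (S q) (next_pre th q g) m)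
  end.

Definition sample_loss (th : params) (x y : nat -> R) : R :=
  rsum (n L) (fun j => l (fwd sigma n th L x j - y j)).

Lemma sample_loss_from_pre d : forall q th x y, (S q + d = L)%nat ->
  loss_from th y d (S q) (pre th q x) = sample_loss th x y.
Proof.
  induction d; intros q th x y H; simpl.
  - unfold sample_loss. now replace L with (S q) by lia.
  - now rewrite <- (IHd (S q) th x y) by lia.
Qed.

Lemma fwd_agree q : forall th th' x, (forall c, (coord_layer c <= q)%nat -> th c = th' c) ->
  forall j, fwd sigma n th q x j = fwd sigma n th' q x j.
Proof.
  induction q; intros th th' x H j; simpl; auto. f_equal. f_equal.
  - apply rsum_ext. intros. rewrite H by (simpl; lia). f_equal.
    apply IHq. intros. apply H. lia.
  - apply H. simpl. lia.
Qed.

Lemma next_pre_agree th th' q g : (forall c, (q < coord_layer c)%nat -> th c = th' c) ->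
  next_pre th q g = next_pre th' q g.
Proof.
  intros H. apply functional_extensionality. intros m. unfold next_pre.
  rewrite H by (simpl; lia). f_equal. apply rsum_ext. intros. rewrite H by (simpl; lia). auto.
Qed.

Lemma loss_from_agree d : forall th th' y q g,
  (forall c, (q < coord_layer c)%nat -> th c = th' c) -> loss_from th y d q g = loss_from th' y d q g.
Proof.
  induction d; intros th th' y q g H; simpl; auto.
  rewrite (next_pre_agree th th') by auto. apply IHd. intros. apply H. lia.
Qed.

Lemma delta_agree d : forall th th' y q g r,
  (forall c, (q < coord_layer c)%nat -> th c = th' c) -> delta th y d q g r = delta th' y d q g r.
Proof.
  induction d; intros th th' y q g r H; simpl; auto.
  rewrite (next_pre_agree th th') by auto. f_equal. apply rsum_ext. intros.
  rewrite H by (simpl; lia). f_equal. apply IHd. intros. apply H. lia.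
Qed.

(* [pre_coef th q x z m] is the derivative of [pre th q x m] in the coordinate [z]. *)
Definition pre_coef (th : params) (q : nat) (x : nat -> R) (z : coord) (m : nat) : R :=
  match z with
  | CW q' a j => if (Nat.eqb q' (S q) && Nat.eqb j m)%bool then
                   (if Nat.ltb a (n q) then fwd sigma n th q x a else 0) else 0
  | Cb q' j => if (Nat.eqb q' (S q) && Nat.eqb j m)%bool then 1 else 0
  end.

Lemma pre_coef_agree th th' q x z m : (forall c, (coord_layer c <= q)%nat -> th c = th' c) ->
  pre_coef th q x z m = pre_coef th' q x z m.
Proof. intros H. destruct z; simpl; auto. now rewrite (fwd_agree q th th'). Qed.

Lemma pre_perturb th q x z t : (S q <= coord_layer z)%nat -> forall m,
  pre (perturb th z t) q x m = pre th q x m + t * pre_coef th q x z m.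
Proof.
  intros Hz m. unfold pre.
  assert (Hf : forall a, fwd sigma n (perturb th z t) q x a = fwd sigma n th q x a).
  { intros. apply fwd_agree. intros. apply perturb_other. lia. }
  rewrite (rsum_ext _ _ (fun a => th (CW (S q) a m) * fwd sigma n th q x a
       + (if coord_eqb z (CW (S q) a m) then t * fwd sigma n th q x a else 0)))
    by (intros; rewrite Hf, perturb_val; destruct (coord_eqb z _); ring).
  rewrite rsum_plus, perturb_val.
  enough (Hs : rsum (n q) (fun a => if coord_eqb z (CW (S q) a m)
                                    then t * fwd sigma n th q x a else 0)
     + (if coord_eqb z (Cb (S q) m) then t else 0) = t * pre_coef th q x z m) by lra.
  destruct z as [q' a j | q' j]; simpl.
  - destruct (Nat.eqb q' (S q)), (Nat.eqb j m); simpl;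
      try (rewrite rsum_zero by (intros; now rewrite ?Bool.andb_false_r); ring).
    rewrite (rsum_ext _ _ (fun a' => if Nat.eqb a a' then t * fwd sigma n th q x a' else 0))
      by (intros; now rewrite Bool.andb_true_r).
    rewrite rsum_point. destruct (Nat.ltb a (n q)); ring.
  - rewrite rsum_zero by reflexivity. destruct (Nat.eqb q' (S q) && Nat.eqb j m)%bool; ring.
Qed.

Hypothesis Hs1 : forall t, derivable_pt_lim sigma t (s1 t).
Hypothesis Hl1 : forall t, derivable_pt_lim l t (l1 t).

Lemma next_pre_derive th q h h' :
  (forall r, (r < n q)%nat -> derivable_pt_lim (fun t => h t r) 0 (h' r)) ->
  forall m, derivable_pt_lim (fun t => next_pre th q (h t) m) 0
    (rsum (n q) (fun r => th (CW (S q) r m) * (s1 (h 0 r) * h' r))).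
Proof.
  intros Hh m. unfold next_pre. eapply dlim_eq; [| apply Rplus_0_r].
  apply (dlim_plus (fun t => rsum (n q) (fun r => th (CW (S q) r m) * sigma (h t r)))
                   (fun _ => th (Cb (S q) m))); [| apply dlim_const].
  apply (dlim_rsum (n q) (fun r t => th (CW (S q) r m) * sigma (h t r))).
  intros r Hr. apply dlim_scal. eapply dlim_eq.
  - apply (dlim_comp (fun t => h t r) sigma); [apply Hh; auto | apply Hs1].
  - ring.
Qed.

Lemma loss_from_derive d : forall th y q h h',
  (forall r, (r < n q)%nat -> derivable_pt_lim (fun t => h t r) 0 (h' r)) ->
  derivable_pt_lim (fun t => loss_from th y d q (h t)) 0
    (rsum (n q) (fun r => h' r * delta th y d q (h 0) r)).
Proof.
  induction d; intros th y q h h' Hh; simpl.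
  - apply (dlim_rsum (n q) (fun m t => l (sigma (h t m) - y m))).
    intros r Hr. eapply dlim_eq.
    + apply (dlim_comp (fun t => sigma (h t r) - y r) l); [| apply Hl1].
      eapply dlim_eq; [| apply Rplus_0_r].
      apply (dlim_plus (fun t => sigma (h t r)) (fun _ => - y r)); [| apply dlim_const].
      apply (dlim_comp (fun t => h t r) sigma); [apply Hh; auto | apply Hs1].
    + ring.
  - eapply dlim_eq.
    + apply (IHd th y (S q) (fun t => next_pre th q (h t))).
      intros r Hr. apply next_pre_derive, Hh.
    + rewrite (rsum_ext _ _ (fun m => rsum (n q) (fun r => th (CW (S q) r m) * (s1 (h 0 r) * h' r)
          * delta th y d (S q) (next_pre th q (h 0)) m)))
        by (intros; now rewrite <- rsum_mult_r).
      rewrite rsum_swap. apply rsum_ext. intros r Hr.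
      rewrite <- !rsum_mult_l. apply rsum_ext. intros. ring.
Qed.

Definition sample_partial (th : params) (x y : nat -> R) (c : coord) : R :=
  rsum (n (coord_layer c)) (fun r => pre_coef th (pred (coord_layer c)) x c r *
      delta th y (L - coord_layer c) (coord_layer c) (pre th (pred (coord_layer c)) x) r).

Lemma sample_loss_partial th x y c : (1 <= coord_layer c <= L)%nat ->
  derivable_pt_lim (fun t => sample_loss (perturb th c t) x y) 0 (sample_partial th x y c).
Proof.
  intros Hc. unfold sample_partial. destruct (coord_layer c) as [| q] eqn:Ec; [lia |].
  simpl pred.
  apply (dlim_ext (fun t => loss_from th y (L - S q) (S q) (pre (perturb th c t) q x))).
  { intros t. rewrite <- (sample_loss_from_pre (L - S q) q (perturb th c t) x y) by lia.
    symmetry. apply loss_from_agree. intros. apply perturb_other. lia. }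
  eapply dlim_eq; [apply loss_from_derive |].
  - intros r Hr. apply (dlim_ext (fun t => pre th q x r + t * pre_coef th q x c r)).
    + intros t. rewrite pre_perturb by lia. ring.
    + apply dlim_affine.
  - apply rsum_ext. intros r Hr. do 2 f_equal. apply functional_extensionality. intros m.
    rewrite pre_perturb by lia. ring.
Qed.

Lemma delta_stationary_output th (Hpos : forall t, 0 < s1 t) d : forall q x y,
  (S q + d = L)%nat ->
  (forall q', (S (S q) <= q' <= L)%nat -> full_column_rank n th q') ->
  (forall r, (r < n (S q))%nat -> delta th y d (S q) (pre th q x) r = 0) ->
  forall m, (m < n L)%nat -> l1 (fwd sigma n th L x m - y m) = 0.
Proof.
  induction d; intros q x y HL Hrank Hdelta m Hm.
  - rewrite Nat.add_0_r in HL. subst L. specialize (Hdelta m Hm). simpl in Hdelta.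
    destruct (Rmult_integral _ _ Hdelta) as [H | H]; [exact H |].
    specialize (Hpos (pre th q x m)). lra.
  - apply (IHd (S q) x y); [lia | intros; apply Hrank; lia | | exact Hm].
    apply (Hrank (S (S q))); [lia |]. intros r Hr.
    specialize (Hdelta r Hr). simpl in Hdelta.
    destruct (Rmult_integral _ _ Hdelta) as [H | H]; [specialize (Hpos (pre th q x r)); lra |].
    exact H.
Qed.

Lemma Phi_global_min_of_stationary N X Y th :
  (forall a, l1 a = 0 -> forall b, l a <= l b) ->
  (forall i, (i < N)%nat -> forall m, (m < n L)%nat -> l1 (fwd sigma n th L (X i) m - Y i m) = 0) ->
  global_min (Phi sigma l L n N X Y) th.
Proof.
  intros Hmin Hstat th'. apply rsum_le. intros i Hi. apply rsum_le. intros m Hm.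
  apply Hmin. auto.
Qed.

Hypothesis Hs2 : forall t, derivable_at s1 t.
Hypothesis Hl2 : forall t, derivable_at l1 t.

Lemma sigma_derivable f x : derivable_at f x -> derivable_at (fun t => sigma (f t)) x.
Proof. intros H. apply derivable_at_comp; [exact H | eexists; apply Hs1]. Qed.

Lemma fwd_perturb_derivable th z q : forall x r,
  derivable_at (fun t => fwd sigma n (perturb th z t) q x r) 0.
Proof.
  induction q; intros x r; simpl; [apply derivable_at_const |].
  apply sigma_derivable, derivable_at_plus; [| apply perturb_derivable].
  apply (derivable_at_rsum (n q)
    (fun a t => perturb th z t (CW (S q) a r) * fwd sigma n (perturb th z t) q x a)).
  intros. apply derivable_at_mult; [apply perturb_derivable | apply IHq].
Qed.

Lemma pre_perturb_derivable th z q x r : derivable_at (fun t => pre (perturb th z t) q x r) 0.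
Proof.
  unfold pre. apply derivable_at_plus; [| apply perturb_derivable].
  apply (derivable_at_rsum (n q)
    (fun a t => perturb th z t (CW (S q) a r) * fwd sigma n (perturb th z t) q x a)).
  intros. apply derivable_at_mult; [apply perturb_derivable | apply fwd_perturb_derivable].
Qed.

Lemma delta_derivable d : forall th y q h r, (forall r', derivable_at (fun t => h t r') 0) ->
  derivable_at (fun t => delta th y d q (h t) r) 0.
Proof.
  induction d; intros th y q h r Hh; simpl.
  - apply derivable_at_mult; [| apply derivable_at_comp; auto].
    apply (derivable_at_comp (fun t => sigma (h t r) - y r) l1); [| apply Hl2].
    apply derivable_at_plus; [apply sigma_derivable; auto | apply derivable_at_const].
  - apply derivable_at_mult; [apply derivable_at_comp; auto |].
    apply (derivable_at_rsum (n (S q))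
      (fun m t => th (CW (S q) r m) * delta th y d (S q) (next_pre th q (h t)) m)).
    intros m Hm. apply derivable_at_mult; [apply derivable_at_const |].
    apply (IHd th y (S q) (fun t => next_pre th q (h t))). intros r'. unfold next_pre.
    apply derivable_at_plus; [| apply derivable_at_const].
    apply (derivable_at_rsum (n q) (fun a t => th (CW (S q) a r') * sigma (h t a))).
    intros. apply derivable_at_mult; [apply derivable_at_const | apply sigma_derivable; auto].
Qed.

Lemma sample_partial_derivable th z x y c : (coord_layer z <= coord_layer c)%nat ->
  derivable_at (fun t => sample_partial (perturb th z t) x y c) 0.
Proof.
  intros Hz. unfold sample_partial.
  apply (derivable_at_rsum (n (coord_layer c)) (fun r t =>
    pre_coef (perturb th z t) (pred (coord_layer c)) x c r *
    delta (perturb th z t) y (L - coord_layer c) (coord_layer c)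
          (pre (perturb th z t) (pred (coord_layer c)) x) r)).
  intros r Hr. apply derivable_at_mult.
  - destruct c; simpl; [| apply derivable_at_const].
    destruct (_ && _)%bool; [| apply derivable_at_const].
    destruct (_ <? _); [apply fwd_perturb_derivable | apply derivable_at_const].
  - apply (derivable_at_ext (fun t => delta th y (L - coord_layer c) (coord_layer c)
                                  (pre (perturb th z t) (pred (coord_layer c)) x) r)).
    + intros t. apply delta_agree. intros. symmetry. apply perturb_other. lia.
    + apply delta_derivable. intros. apply pre_perturb_derivable.
Qed.

(* The incoming parameters of unit [j] of layer [k+1]: the weights
   [(W_{k+1})_{pj}] for [p < n_k], then the bias [(b_{k+1})_j] for [p = n_k];
   [feature] gives the matching entry of the augmented feature vector. *)
Definition in_coord (k j p : nat) : coord :=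
  if Nat.ltb p (n k) then CW (S k) p j else Cb (S k) j.

Definition feature (th : params) (k : nat) (x : nat -> R) (p : nat) : R :=
  if Nat.ltb p (n k) then fwd sigma n th k x p else 1.

Lemma in_coord_layer k j p : coord_layer (in_coord k j p) = S k.
Proof. unfold in_coord. now destruct (p <? n k). Qed.

Lemma in_coord_valid k j p : (S k <= L)%nat -> (j < n (S k))%nat -> (p < S (n k))%nat ->
  valid L n (in_coord k j p).
Proof.
  intros HkL Hj Hp. unfold in_coord. destruct (Nat.ltb_spec p (n k)); simpl; [| lia].
  rewrite Nat.sub_0_r. lia.
Qed.

Lemma pre_coef_in_coord th k x j p m : (p < S (n k))%nat ->
  pre_coef th k x (in_coord k j p) m = feature th k x p * pre_coef th k x (Cb (S k) j) m.
Proof.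
  intros Hp. unfold in_coord, feature. simpl. rewrite Nat.eqb_refl. simpl.
  destruct (Nat.ltb_spec p (n k)); simpl; rewrite ?Nat.eqb_refl; simpl;
    [apply Nat.ltb_lt in H; rewrite H |]; destruct (j =? m); ring.
Qed.

Lemma sample_partial_in_coord th x y k j p : (j < n (S k))%nat -> (p < S (n k))%nat ->
  sample_partial th x y (in_coord k j p)
  = feature th k x p * delta th y (L - S k) (S k) (pre th k x) j.
Proof.
  intros Hj Hp. unfold sample_partial. rewrite in_coord_layer. simpl pred.
  rewrite (rsum_ext _ _ (fun r => if Nat.eqb j r
      then feature th k x p * delta th y (L - S k) (S k) (pre th k x) r else 0)).
  - rewrite rsum_point. apply Nat.ltb_lt in Hj. now rewrite Hj.
  - intros r Hr. rewrite pre_coef_in_coord by exact Hp. simpl. rewrite Nat.eqb_refl. simpl.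
    destruct (j =? r); ring.
Qed.

Lemma sample_loss_in_coord_as_bias th k j p c x y u t :
  (p < S (n k))%nat -> (S k <= coord_layer c <= L)%nat ->
  sample_loss (perturb (perturb th (in_coord k j p) u) c t) x y
  = sample_loss (perturb (perturb th (Cb (S k) j) (u * feature th k x p)) c t) x y.
Proof.
  intros Hp Hc.
  rewrite <- !(sample_loss_from_pre (L - S k) k) by lia.
  rewrite (loss_from_agree _ _ (perturb (perturb th (Cb (S k) j) (u * feature th k x p)) c t)).
  2: { intros c' Hc'. rewrite !perturb_val, (coord_eqb_false_layer (in_coord k j p)),
       (coord_eqb_false_layer (Cb (S k) j)); [ring | simpl | rewrite in_coord_layer]; lia. }
  f_equal. apply functional_extensionality. intros m.
  rewrite !pre_perturb by (rewrite ?in_coord_layer; simpl; lia).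
  rewrite (pre_coef_agree (perturb th (in_coord k j p) u) th),
          (pre_coef_agree (perturb th (Cb (S k) j) _) th), pre_coef_in_coord
    by (auto; intros; apply perturb_other; rewrite ?in_coord_layer; simpl; lia).
  ring.
Qed.

Lemma hessian_in_coord N X Y th H k j p c :
  is_hessian (Phi sigma l L n N X Y) L n th H -> valid L n c -> (S k <= coord_layer c)%nat ->
  (S k <= L)%nat -> (j < n (S k))%nat -> (p < S (n k))%nat ->
  H c (in_coord k j p) = rsum N (fun i => feature th k (X i) p *
      Derive (fun s => sample_partial (perturb th (Cb (S k) j) s) (X i) (Y i) c) 0).
Proof.
  intros [G [HG HH]] Hc Hkc HkL Hj Hp.
  assert (Hlc : (1 <= coord_layer c <= L)%nat) by (destruct c; simpl in *; lia).
  set (Gb := fun u => rsum N (fun i =>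
    sample_partial (perturb th (Cb (S k) j) (u * feature th k (X i) p)) (X i) (Y i) c)).
  assert (HGb : forall u, G c (perturb th (in_coord k j p) u) = Gb u).
  { intros u. apply (uniqueness_limite _ 0 _ _ (HG c Hc (perturb th (in_coord k j p) u))).
    apply (dlim_ext (fun t => rsum N (fun i => sample_loss
      (perturb (perturb th (Cb (S k) j) (u * feature th k (X i) p)) c t) (X i) (Y i)))).
    - intros t. apply rsum_ext. intros i Hi. symmetry. apply sample_loss_in_coord_as_bias; lia.
    - apply (dlim_rsum N (fun i t => sample_loss
        (perturb (perturb th (Cb (S k) j) (u * feature th k (X i) p)) c t) (X i) (Y i))).
      intros i Hi. now apply sample_loss_partial. }
  apply (uniqueness_limite _ 0 _ _ (HH c _ Hc (in_coord_valid k j p HkL Hj Hp))).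
  apply (dlim_ext Gb); [intros u; now rewrite HGb |].
  apply dlim_rsum. intros i Hi. eapply dlim_eq.
  - apply (dlim_comp (fun u => u * feature th k (X i) p)
             (fun s => sample_partial (perturb th (Cb (S k) j) s) (X i) (Y i) c)).
    + apply (dlim_ext (fun u => 0 + u * feature th k (X i) p)); [intros; ring | apply dlim_affine].
    + rewrite Rmult_0_l. apply Derive_spec, sample_partial_derivable. simpl. lia.
  - ring.
Qed.

Definition unit0_vec (k : nat) (u : nat -> R) (c : coord) : R :=
  match c with
  | CW q p j => if (Nat.eqb q (S k) && Nat.eqb j 0 && Nat.ltb p (n k))%bool then u p else 0
  | Cb q j => if (Nat.eqb q (S k) && Nat.eqb j 0)%bool then u (n k) else 0
  end.

Lemma unit0_vec_in_coord k u p : (p < S (n k))%nat -> unit0_vec k u (in_coord k 0 p) = u p.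
Proof.
  intros Hp. unfold in_coord. destruct (Nat.ltb_spec p (n k)); simpl; rewrite Nat.eqb_refl; simpl.
  - apply Nat.ltb_lt in H. now rewrite H.
  - f_equal. lia.
Qed.

Lemma unit0_vec_off_layer k u c : coord_layer c <> S k -> unit0_vec k u c = 0.
Proof.
  intros Hc. destruct c as [q p j | q j]; simpl in *;
    destruct (Nat.eqb_spec q (S k)); easy.
Qed.

Lemma listsum_unit0_vec k u (f : coord -> R) : (S k <= L)%nat -> (1 <= n (S k))%nat ->
  listsum (coords L n) (fun c => f c * unit0_vec k u c)
  = rsum (S (n k)) (fun p => f (in_coord k 0 p) * u p).
Proof.
  intros HkL Hn.
  rewrite (listsum_coords_layer L n (S k)) by
    (lia || (intros c Hc; rewrite unit0_vec_off_layer by exact Hc; ring)).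
  unfold layer_coords. rewrite listsum_app, listsum_flat_map, !listsum_map.
  replace (S k - 1)%nat with k by lia. rewrite listsum_seq0. simpl rsum.
  assert (Hpoint : forall g : nat -> coord, (forall j, unit0_vec k u (g j) = 0 \/ j = 0%nat) ->
    listsum (seq 0 (n (S k))) (fun j => f (g j) * unit0_vec k u (g j))
    = f (g 0%nat) * unit0_vec k u (g 0%nat)).
  { intros g Hg. apply (listsum_seq_point 0 (n (S k)) (fun j => f (g j) * unit0_vec k u (g j)));
      [lia |]. intros j Hj.
    destruct (Hg j) as [-> | ->]; [ring | easy]. }
  unfold in_coord. rewrite Nat.ltb_irrefl, (Hpoint (Cb (S k))).
  - f_equal.
    + apply rsum_ext. intros p Hp. cbv beta. apply Nat.ltb_lt in Hp as Hp'.
      rewrite Hp', listsum_map, (Hpoint (CW (S k) p)).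
      * simpl. now rewrite Nat.eqb_refl, Hp'.
      * intros j. destruct j; [now right | left; simpl; now rewrite Nat.eqb_refl].
    + simpl. now rewrite Nat.eqb_refl.
  - intros j. destruct j; [now right | left; simpl; now rewrite Nat.eqb_refl].
Qed.

Lemma feature_kernel_trivial N X Y th k I :
  nondegenerate_on_layers (Phi sigma l L n N X Y) L n I th ->
  (S k <= L)%nat -> (1 <= n (S k))%nat -> I (S k) = true ->
  (forall q, I q = true -> (S k <= q)%nat) ->
  forall u, (forall i, (i < N)%nat -> rsum (S (n k)) (fun p => feature th k (X i) p * u p) = 0) ->
  forall p, (p < S (n k))%nat -> u p = 0.
Proof.
  intros [H [Hhess Hns]] HkL Hn HIk HI u Hu p Hp.
  rewrite <- (unit0_vec_in_coord k u p Hp). apply Hns.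
  2: { apply filter_In. split; [apply in_coords, in_coord_valid; lia |].
       now rewrite in_coord_layer. }
  intros c Hc. apply filter_In in Hc as [Hc HIc]. apply in_coords in Hc.
  change (listsum (filter (fun c' => I (coord_layer c')) (coords L n))
            (fun c' => H c c' * unit0_vec k u c') = 0).
  rewrite listsum_filter.
  2: { intros c' _ Hoff. rewrite unit0_vec_off_layer; [ring | congruence]. }
  rewrite listsum_unit0_vec by assumption.
  set (kappa := fun i => Derive (fun s =>
    sample_partial (perturb th (Cb (S k) 0) s) (X i) (Y i) c) 0).
  rewrite (rsum_ext _ _ (fun q => rsum N (fun i => kappa i * (feature th k (X i) q * u q)))).
  - rewrite rsum_swap. apply rsum_zero. intros i Hi. now rewrite rsum_mult_l, Hu, Rmult_0_r.
  - intros q Hq. rewrite (hessian_in_coord N X Y th H k 0 q c), <- rsum_mult_r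
      by (auto; lia || (apply HI in HIc; lia)).
    apply rsum_ext. intros. unfold kappa. ring.
Qed.

Lemma critical_deltas_vanish N X Y th k :
  (S k <= L)%nat -> (N <= S (n k))%nat ->
  critical_point (Phi sigma l L n N X Y) L n th ->
  (forall u, (forall i, (i < N)%nat -> rsum (S (n k)) (fun p => feature th k (X i) p * u p) = 0) ->
     forall p, (p < S (n k))%nat -> u p = 0) ->
  forall j, (j < n (S k))%nat -> forall i, (i < N)%nat ->
  delta th (Y i) (L - S k) (S k) (pre th k (X i)) j = 0.
Proof.
  intros HkL HN Hcrit Hker j Hj.
  apply (RankArgument.trivial_cokernel_of_trivial_kernel N (S (n k))
           (fun i p => feature th k (X i) p) HN Hker
           (fun i => delta th (Y i) (L - S k) (S k) (pre th k (X i)) j)).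
  intros p Hp.
  assert (Hgrad : derivable_pt_lim (fun t => Phi sigma l L n N X Y (perturb th (in_coord k j p) t))
                    0 (rsum N (fun i => sample_partial th (X i) (Y i) (in_coord k j p)))).
  { apply (dlim_rsum N (fun i t => sample_loss (perturb th (in_coord k j p) t) (X i) (Y i))).
    intros i Hi. apply sample_loss_partial. rewrite in_coord_layer. lia. }
  rewrite (uniqueness_limite _ _ _ _ (Hcrit _ (in_coord_valid k j p HkL Hj Hp)) Hgrad).
  apply rsum_ext. intros i Hi. rewrite sample_partial_in_coord by assumption. ring.
Qed.

End Network.

Theorem mainTheorem5
  (sigma l : R -> R) (L : nat) (n : nat -> nat) (N : nat)
  (X Y : nat -> nat -> R) (k : nat) (I : nat -> bool) (th : params)
  (Hwidth : forall q, (q <= L)%nat -> (1 <= n q)%nat)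
  (Hx : forall i j, (i < N)%nat -> (j < N)%nat -> i <> j ->
          exists p, (p < n 0)%nat /\ X i p <> X j p)
  (Hsigma : activation_ok sigma)
  (Hl : loss_ok l)
  (Hattained : exists th0, global_min (Phi sigma l L n N X Y) th0)
  (Hk : (1 <= k <= L - 1)%nat)
  (HnK : (N - 1 <= n k)%nat)
  (Hcrit : critical_point (Phi sigma l L n N X Y) L n th)
  (HI : forall q, I q = true -> (k + 1 <= q <= L)%nat)
  (HIk : I (k + 1)%nat = true)
  (Hnondeg : nondegenerate_on_layers (Phi sigma l L n N X Y) L n I th)
  (Hrank : forall q, (k + 2 <= q <= L)%nat -> full_column_rank n th q) :
  global_min (Phi sigma l L n N X Y) th.
Proof.
  destruct Hsigma as [Han [Hder _]].
  destruct Hl as [l1 [l2 [Hl1 [Hl2 [_ Hmin]]]]].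
  assert (Hs1 : forall t, derivable_pt_lim sigma t (Derive sigma t)).
  { intros t. destruct (Hder t) as [d [Hd _]]. apply Derive_spec. now exists d. }
  assert (Hpos : forall t, 0 < Derive sigma t).
  { intros t. destruct (Hder t) as [d [Hd Hd0]].
    now rewrite (uniqueness_limite sigma t _ d (Hs1 t) Hd). }
  assert (Hs2 : forall t, derivable_at (Derive sigma) t).
  { intros t. destruct (real_analytic_ex_derive_Derive sigma Han t) as [v Hv].
    exists v. now apply is_derive_Reals. }
  assert (Hl2' : forall t, derivable_at l1 t) by (intros t; now exists (l2 t)).
  rewrite Nat.add_1_r in HIk.
  assert (Hker := feature_kernel_trivial sigma l (Derive sigma) l1 n L Hs1 Hl1 Hs2 Hl2'
                    N X Y th k I Hnondeg ltac:(lia) ltac:(apply Hwidth; lia) HIk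
                    ltac:(intros q Hq; apply HI in Hq; lia)).
  apply (Phi_global_min_of_stationary sigma l l1 n L N X Y th Hmin).
  intros i Hi. apply (delta_stationary_output sigma (Derive sigma) l1 n L th Hpos (L - S k) k);
    [lia | intros; apply Hrank; lia |].
  intros r Hr. apply (critical_deltas_vanish sigma l (Derive sigma) l1 n L Hs1 Hl1 N X Y th k);
    auto; lia.
Qed.
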